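(* Let $R$ be an associative ring with identity, let $a,b,c\in R$ with both $b$ and $c$ regular, and put $t=cab$. Then the following are equivalent: (i) $a$ has a $(b,c)$-inverse; (ii) $r(a)\cap bR=\{0\}$ and $R=abR\oplus r(c)$; (iii) $r(t)=r(b)$ and $tR=cR$; (iv) $l(t)=l(c)$ and $Rt=Rb$.
   Context: For $a,b,c\in R$, $a$ is $(b,c)$-invertible if there exists $y\in R$ with $y\in (bRy)\cap(yRc)$, $yab=b$ and $cay=c$; such $y$ is unique and called the $(b,c)$-inverse of $a$, denoted $a^{\|(b,c)}$. An element is regular if $x=xzx$ for some $z\in R$. For $x\in R$: $l(x)=\{z\in R:zx=0\}$, $r(x)=\{z\in R:xz=0\}$, $xR=\{xz:z\in R\}$, $Rx=\{zx:z\in R\}$; $\oplus$ denotes an internal direct sum of additive subgroups. *)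

From HB Require Import structures.
From mathcomp Require Import all_boot all_algebra.
Set Implicit Arguments. Unset Strict Implicit. Unset Printing Implicit Defensive.
Import GRing.Theory.
Local Open Scope ring_scope.

Definition lann {R : pzRingType} (x : R) : R -> Prop := fun z => z * x = 0.
Definition rann {R : pzRingType} (x : R) : R -> Prop := fun z => x * z = 0.
Definition rideal {R : pzRingType} (x : R) : R -> Prop := fun w => exists z, w = x * z.
Definition lideal {R : pzRingType} (x : R) : R -> Prop := fun w => exists z, w = z * x.

Definition set_eq {R : Type} (A B : R -> Prop) : Prop := forall z, A z <-> B z.

Definition meet_zero {R : pzRingType} (A B : R -> Prop) : Prop :=
  forall z, A z -> B z -> z = 0.

Definition full_direct_sum {R : pzRingType} (A B : R -> Prop) : Prop :=
  (forall x : R, exists s k, A s /\ B k /\ x = s + k) /\ meet_zero A B.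

Definition regular {R : pzRingType} (x : R) : Prop := exists z, x = x * z * x.

Definition is_bc_inverse {R : pzRingType} (a b c y : R) : Prop :=
  (exists u, y = b * u * y) /\ (exists v, y = y * v * c) /\
  y * a * b = b /\ c * a * y = c.

Definition bc_invertible {R : pzRingType} (a b c : R) : Prop :=
  exists y, is_bc_inverse a b c y.

(* A (b,c)-inverse exists iff b ∈ Rt and c ∈ tR: given b = pt and
   c = tq, the element bq = pc is the inverse, and conversely y = yvc, yab = b
   give b = (yv)t while y = buy, cay = c give c = t(uy).  Each of (ii)-(iv)
   yields one of the two memberships directly, and also shows that t is
   regular (t ∈ cR is regular as soon as c ∈ tR and c is regular).  For a
   regular t = tzt, an annihilator inclusion r(t) ⊆ r(b) gives b = bzt, and
   l(t) ⊆ l(c) gives c = tzc, which supplies the other membership. *)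
From mathcomp Require Import all_boot all_algebra.
Set Implicit Arguments. Unset Strict Implicit. Unset Printing Implicit Defensive.
Import GRing.Theory.
Local Open Scope ring_scope.

Section RegularFactor.
Variables (R : pzRingType) (x y z : R).
Hypothesis xzx : x = x * z * x.

Lemma regular_rann_factor : (forall w, x * w = 0 -> y * w = 0) -> y = y * z * x.
Proof.
move=> rann_sub; apply/eqP; rewrite -subr_eq0 -mulrA -{1}(mulr1 y) -mulrBr.
by apply/eqP/rann_sub; rewrite mulrBr mulr1 mulrA -xzx subrr.
Qed.

Lemma regular_lann_factor : (forall w, w * x = 0 -> w * y = 0) -> y = x * z * y.
Proof.
move=> lann_sub; apply/eqP; rewrite -subr_eq0 -{1}(mul1r y) -mulrBl.
by apply/eqP/lann_sub; rewrite mulrBl mul1r -xzx subrr.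
Qed.

End RegularFactor.

Lemma regular_rideal_factor (R : pzRingType) (c c' t s q : R) :
  c = c * c' * c -> t = c * s -> c = t * q -> t = t * (q * c') * t.
Proof.
move=> cc'c tcs ctq.
by rewrite mulrA -ctq {2}tcs !mulrA -cc'c -tcs.
Qed.

Lemma regular_lideal_factor (R : pzRingType) (b b' t s p : R) :
  b = b * b' * b -> t = s * b -> b = p * t -> t = t * (b' * p) * t.
Proof.
move=> bb'b tsb bpt.
by rewrite -mulrA -(mulrA b') -bpt {2}tsb -!mulrA (mulrA b) -bb'b -tsb.
Qed.

Section BcInverse.
Variables (R : pzRingType) (a b c : R).
Local Notation t := (c * a * b).

Lemma bc_invertibleP :
  bc_invertible a b c <-> (exists p, b = p * t) /\ (exists q, c = t * q).
Proof.
split.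
  move=> [y [[u yuy] [[v yvc] [yab cay]]]]; split.
    by exists (y * v); rewrite !mulrA -yvc yab.
  by exists (u * y); rewrite -{1}cay {1}yuy !mulrA.
move=> [[p bpt] [q ctq]].
have bq_pc : b * q = p * c by rewrite ctq mulrA -bpt.
have bqab : b * q * a * b = b by rewrite bq_pc {2}bpt !mulrA.
exists (b * q); split; [|split; [|split]].
- by exists (q * a); rewrite !mulrA bqab.
- by exists (a * p); rewrite !mulrA -(mulrA _ p c) -bq_pc !mulrA bqab.
- exact: bqab.
- by rewrite mulrA -ctq.
Qed.

Lemma bc_invertible_of_rann q :
  regular c -> c = t * q -> (forall w, t * w = 0 -> b * w = 0) ->
  bc_invertible a b c.
Proof.
move=> [c' cc'c] ctq rann_sub; apply/bc_invertibleP; split; last by exists q.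
have tzt := regular_rideal_factor cc'c (esym (mulrA c a b)) ctq.
by exists (b * (q * c')); apply: regular_rann_factor tzt _.
Qed.

Lemma bc_invertible_of_lann p :
  regular b -> b = p * t -> (forall w, w * t = 0 -> w * c = 0) ->
  bc_invertible a b c.
Proof.
move=> [b' bb'b] bpt lann_sub; apply/bc_invertibleP; split; first by exists p.
have tzt := regular_lideal_factor bb'b (erefl t) bpt.
by exists (b' * p * c); rewrite !mulrA -(mulrA t); apply: regular_lann_factor tzt _.
Qed.

Lemma bc_invertible_iff_direct_sum :
  regular c ->
  bc_invertible a b c <->
  meet_zero (rann a) (rideal b) /\ full_direct_sum (rideal (a * b)) (rann c).
Proof.
move=> reg_c; have [c' cc'c] := reg_c; split.
  move=> /bc_invertibleP [[p bpt] [q ctq]].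
  have tw0 w : t * w = 0 -> b * w = 0 by move=> tw; rewrite bpt -mulrA tw mulr0.
  split; last split.
  - move=> z az0 [w zbw]; rewrite zbw in az0 *.
    by apply: tw0; rewrite -!mulrA az0 mulr0.
  - move=> x; set s := a * b * (q * c' * c * x).
    exists s, (x - s); split; first by exists (q * c' * c * x).
    split; last by rewrite addrC subrK.
    by rewrite /rann mulrBr /s !mulrA -ctq -cc'c subrr.
  - move=> _ [w ->] cabw0.
    by rewrite -mulrA tw0 ?mulr0 // -cabw0 !mulrA.
move=> [rann_a_meet [decomp rann_c_meet]].
have [_ [k [[w ->] [ck0 one_split]]]] := decomp 1.
have ctw : c = t * w by rewrite -{1}(mulr1 c) one_split mulrDr ck0 addr0 !mulrA.
apply: (bc_invertible_of_rann reg_c ctw) => v tv0.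
apply: rann_a_meet; last by exists v.
by rewrite /rann mulrA; apply: rann_c_meet; [exists v | rewrite /rann !mulrA].
Qed.

Lemma bc_invertible_iff_rann_rideal :
  regular c ->
  bc_invertible a b c <->
  set_eq (rann t) (rann b) /\ set_eq (rideal t) (rideal c).
Proof.
move=> reg_c; split.
  move=> /bc_invertibleP [[p bpt] [q ctq]]; split=> z; split.
  - by rewrite /rann => tz0; rewrite bpt -mulrA tz0 mulr0.
  - by rewrite /rann -mulrA => ->; rewrite mulr0.
  - by move=> [w ->]; exists (a * b * w); rewrite !mulrA.
  - by move=> [w ->]; exists (q * w); rewrite {1}ctq mulrA.
move=> [rann_eq rideal_eq].
have [q ctq] : rideal t c by apply/rideal_eq; exists 1; rewrite mulr1.
by apply: (bc_invertible_of_rann reg_c ctq) => w /rann_eq.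
Qed.

Lemma bc_invertible_iff_lann_lideal :
  regular b ->
  bc_invertible a b c <->
  set_eq (lann t) (lann c) /\ set_eq (lideal t) (lideal b).
Proof.
move=> reg_b; split.
  move=> /bc_invertibleP [[p bpt] [q ctq]]; split=> z; split.
  - by rewrite /lann => zt0; rewrite ctq mulrA zt0 mul0r.
  - by rewrite /lann !mulrA => ->; rewrite !mul0r.
  - by move=> [w ->]; exists (w * (c * a)); rewrite !mulrA.
  - by move=> [w ->]; exists (w * p); rewrite {1}bpt mulrA.
move=> [lann_eq lideal_eq].
have [p bpt] : lideal t b by apply/lideal_eq; exists 1; rewrite mul1r.
by apply: (bc_invertible_of_lann reg_b bpt) => w /lann_eq.
Qed.

End BcInverse.

Theorem theorem3p6 (R : pzRingType) (a b c : R) :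
  regular b -> regular c ->
  let t := c * a * b in
  [/\ (bc_invertible a b c <->
        (meet_zero (rann a) (rideal b) /\ full_direct_sum (rideal (a * b)) (rann c))),
      (bc_invertible a b c <->
        (set_eq (rann t) (rann b) /\ set_eq (rideal t) (rideal c))) &
      (bc_invertible a b c <->
        (set_eq (lann t) (lann c) /\ set_eq (lideal t) (lideal b)))].
Proof.
move=> reg_b reg_c t; split.
- exact: bc_invertible_iff_direct_sum.
- exact: bc_invertible_iff_rann_rideal.
- exact: bc_invertible_iff_lann_lideal.
Qed.
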